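(* Let $i\in[n-2]$ and $a\in\mathbb{Q}[x_1,\dots,x_n][S_n^{i\searrow}]$, and let $y\in\{x_1,\dots,x_n\}$. Then $a\odot R_i(y)=a\odot(y-\theta_{i+1})R_{i+1}(y)$.
   Context: Permutations in one-line notation, $wt_{i,j}$ is $w$ with positions $i<j$ swapped, $\ell$ the number of inversions, $u\lessdot w$ iff $w=ut_{i,j}$ with $\ell(w)=\ell(u)+1$. $S_n^{i\searrow}=\{v\in S_n:v(i+1)>\dots>v(n)\}$, and $\mathbb{Q}[x_1,\dots,x_n][S_n^{i\searrow}]$ is the span of $S_n^{i\searrow}$ over the polynomial ring. Fomin–Kirillov algebra $\mathcal{E}_n$: generators $d_{i,j}$ ($1\le i<j\le n$), relations $d_{i,j}^2=0$; $d_{i,j}d_{j,k}=d_{i,k}d_{i,j}+d_{j,k}d_{i,k}$ and $d_{j,k}d_{i,j}=d_{i,j}d_{i,k}+d_{i,k}d_{j,k}$ ($i<j<k$); $d_{i,j}d_{k,l}=d_{k,l}d_{i,j}$ ($i,j,k,l$ distinct). Right action: $w\odot d_{i,j}=wt_{i,j}$ if $wt_{i,j}\lessdot w$, else $0$; $\mathbb{Q}[x_1,\dots,x_n]\otimes\mathcal{E}_n$ acts on $\mathbb{Q}[x_1,\dots,x_n][S_n]$ by $(fw)\odot(g\otimes e)=fg(w\odot e)$. $B_{i,j}=d_{1,j}+\dots+d_{i,j}$; $R_i(y)=(y+B_{i,i+1})(y+B_{i,i+2})\cdots(y+B_{i,n})$. Dunkl element $\theta_i=-\sum_{j<i}d_{j,i}+\sum_{j>i}d_{i,j}$.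 *)

From HB Require Import structures.
From mathcomp Require Import all_boot all_order all_algebra all_fingroup.
From mathcomp Require Import mpoly.
Set Implicit Arguments. Unset Strict Implicit. Unset Printing Implicit Defensive.
Import GRing.Theory.
Local Open Scope ring_scope.

(* Polynomial ring Q[x_1,...,x_n]; variable x_k is 'X_(k-1) (0-based ordinals). *)
Definition Pol (n : nat) := {mpoly rat[n]}.

(* Q[x_1,...,x_n][S_n]: free module with basis S_n; an element a is the
   coefficient function w |-> a(w).  Permutations w : 'S_n are read in one-line
   notation w(1)...w(n), positions/values being 0-based ordinals. *)
Definition Mod (n : nat) := {ffun 'S_n -> Pol n}.

Definition ninv n (w : 'S_n) : nat :=
  #|[set p : 'I_n * 'I_n | (p.1 < p.2)%N && (w p.2 < w p.1)%N]|.

(* w t_{i,j}: w with positions i and j swapped, i.e. (w t)(k) = w (t k) *)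
Definition swapp n (w : 'S_n) (i j : 'I_n) : 'S_n := (tperm i j * w)%g.

Definition covby n (u w : 'S_n) : bool :=
  [exists i : 'I_n, exists j : 'I_n,
     [&& (i < j)%N, w == swapp u i j & ninv w == (ninv u).+1]].

Definition bvec n (f : Pol n) (w : 'S_n) : Mod n :=
  [ffun v => if v == w then f else 0].

(* right action of the generator d_{i,j} (0-based ordinals) extended
   Q[x]-linearly: (f w) . d_{i,j} = f (w t_{i,j}) if w t_{i,j} <. w, else 0 *)
Definition dact_ord n (i j : 'I_n) (a : Mod n) : Mod n :=
  \sum_(w : 'S_n) (if covby (swapp w i j) w then bvec (a w) (swapp w i j) else 0).

(* d_{i,j} with the paper's 1-based indices i, j in [n] *)
Definition dact n (i j : nat) (a : Mod n) : Mod n :=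
  match (insub i.-1 : option 'I_n), (insub j.-1 : option 'I_n) with
  | Some i', Some j' => dact_ord i' j' a
  | _, _ => 0
  end.

Definition pmul n (f : Pol n) (a : Mod n) : Mod n := [ffun w => f * a w].

Definition Bact n (i j : nat) (a : Mod n) : Mod n :=
  \sum_(1 <= k < i.+1) dact k j a.

Definition yBact n (y : Pol n) (i j : nat) (a : Mod n) : Mod n :=
  pmul y a + Bact i j a.

(* a . R_i(y),  R_i(y) = (y + B_{i,i+1}) (y + B_{i,i+2}) ... (y + B_{i,n});
   right action: the leftmost factor acts first *)
Definition Ract n (y : Pol n) (i : nat) (a : Mod n) : Mod n :=
  foldl (fun b j => yBact y i j b) a (iota i.+1 (n - i)).

Definition thetaact n (m : nat) (a : Mod n) : Mod n :=
  - (\sum_(1 <= j < m) dact j m a) + \sum_(m.+1 <= j < n.+1) dact m j a.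

Definition ythetaact n (y : Pol n) (m : nat) (a : Mod n) : Mod n :=
  pmul y a - thetaact m a.

(* S_n^{i\searrow} (i 1-based): v(i+1) > ... > v(n); with 0-based positions,
   v p > v q whenever i <= p < q *)
Definition desc_tail n (i : nat) (v : 'S_n) : bool :=
  [forall p : 'I_n, forall q : 'I_n, ((i <= p)%N && (p < q)%N) ==> (v q < v p)%N].

Definition in_span_desc n (i : nat) (a : Mod n) : Prop :=
  forall v : 'S_n, a v != 0 -> desc_tail i v.

(* The operator d_{p,q} sends w to w t_{p,q} exactly when w(p) > w(q) and no
   position strictly between p and q carries a value strictly between w(q) and
   w(p): this is read off from
     l(v t_{p,q}) = l(v) + 1 + 2 #{r : p < r < q, v(p) < v(r) < v(q)}
   for p < q and v(p) < v(q).  On the span of S_n^{i\searrow} it follows that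
   d_{i+1,j} vanishes for j >= i+3, that d_{k,j} preserves the span for
   k <= i < j, and that d_{k,i+1} d_{i+1,i+2} acts as d_{i+1,i+2} d_{k,i+2} for
   k <= i.  The first fact turns y - theta_{i+1} into
   y + B_{i,i+1} - d_{i+1,i+2}.  The third, with d_{i+1,i+2}^2 = 0, shows that
   multiplying this by y + B_{i+1,i+2} = y + B_{i,i+2} + d_{i+1,i+2} acts as
   (y + B_{i,i+1})(y + B_{i,i+2}).  In each remaining factor
   y + B_{i+1,j} = y + B_{i,j} + d_{i+1,j} the extra term vanishes, because the
   span is preserved by the factors before it. *)

From HB Require Import structures.
From mathcomp Require Import all_boot all_order all_algebra all_fingroup.
From mathcomp Require Import mpoly zify.
Set Implicit Arguments. Unset Strict Implicit. Unset Printing Implicit Defensive.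
Import GRing.Theory.
Local Open Scope ring_scope.

Section PickSums.
Variable I : finType.

Lemma sum_pick x (P : pred I) : (\sum_(a : I) ((a == x) && P a) = P x)%N.
Proof. by rewrite (bigD1 x) //= eqxx big1 ?addn0 // => a /negbTE ->. Qed.

Lemma sum_pickl x (P : rel I) :
  (\sum_(a : I) \sum_(b : I) ((a == x) && P a b) = \sum_(b : I) P x b)%N.
Proof.
rewrite (bigD1 x) //= [X in (_ + X)%N]big1 ?addn0.
  by apply: eq_bigr => b _; rewrite eqxx.
by move=> a /negbTE xa; apply: big1 => b _; rewrite xa.
Qed.

Lemma sum_pickr x (P : rel I) :
  (\sum_(a : I) \sum_(b : I) ((b == x) && P a b) = \sum_(a : I) P a x)%N.
Proof. by apply: eq_bigr => a _; apply: (sum_pick x (P a)). Qed.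

End PickSums.

Section Inversions.
Variable n : nat.
Implicit Types (u v : 'S_n) (a b k p q r : 'I_n).

Lemma swappE v p q r : swapp v p q r = v (tperm p q r).
Proof. by rewrite /swapp permM. Qed.

Lemma swappK v p q : swapp (swapp v p q) p q = v.
Proof. by rewrite /swapp mulgA tperm2 mul1g. Qed.

Lemma swapp_braid v k p q : k != p -> k != q -> p != q ->
  swapp (swapp v p q) k p = swapp (swapp v k q) p q.
Proof.
move=> kNp kNq pNq; rewrite /swapp !mulgA; congr (_ * v)%g.
have -> : tperm k p = (tperm k q ^ tperm p q)%g.
  by rewrite tpermJ tpermD 1?eq_sym // tpermR.
by rewrite /conjg tpermV -!mulgA tperm2 mulg1.
Qed.

Definition gap v p q : pred 'I_n :=
  [pred r : 'I_n | [&& p < r, r < q, v p < v r & v r < v q]%N].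

Lemma ninv_sum v : ninv v = (\sum_(a < n) \sum_(b < n) ((a < b) && (v b < v a))%N)%N.
Proof.
rewrite /ninv -sum1dep_card pair_bigA big_mkcond /=.
by apply: eq_bigr => -[a b] _; case: ifP.
Qed.

(* Under t = t_{p,q} only the pairs meeting {p, q} inside [p, q] change their
   relative order; the extra terms on each side are the pairs gained and lost. *)
Lemma ltn_tperm_indicator p q a b (c : bool) : (p < q)%N ->
  (((tperm p q a < tperm p q b) && c) + ((a == p) && ((b == q) && c))
   + ((a == p) && [&& p < b, b < q & c]) + ((b == q) && [&& p < a, a < q & c]) =
   ((a < b) && c) + ((a == q) && ((b == p) && c))
   + ((b == p) && [&& p < a, a < q & c]) + ((a == q) && [&& p < b, b < q & c]))%N.
Proof.
case: c; rewrite ?andbF //= => pq.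
have tpermE x : (tperm p q x : nat) = if x == p then q else if x == q then p else x.
  by case: tpermP => [->|->|/eqP/negbTE -> /eqP/negbTE ->]; rewrite ?eqxx //;
    case: eqP => // ->.
rewrite !tpermE -!val_eqE /=.
by do 4 case: eqP => ?; lia.
Qed.

Lemma card_gapE v p q : #|gap v p q| = (\sum_(r < n) gap v p q r)%N.
Proof.
rewrite -sum1_card big_mkcond; apply: eq_bigr => r _.
by rewrite -topredE /=; case: (gap v p q r).
Qed.

Lemma card_gap_adj v p q : q = p.+1 :> nat -> #|gap v p q| = 0%N.
Proof.
by move=> qE; apply: eq_card0 => r; rewrite -!topredE /= /gap /= qE ltnS; case: leqP.
Qed.

Lemma gap_indicator v p q r : (v p < v q)%N ->
  (([&& p < r, r < q & v r < v p] + [&& p < r, r < q & v q < v r] + 2 * gap v p q r) =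
   ([&& p < r, r < q & v p < v r] + [&& p < r, r < q & v r < v q]))%N.
Proof.
move=> vpq; rewrite /gap /=.
case pr: (p < r)%N; case rq: (r < q)%N => //=.
have vrNp : (v r : nat) != v p.
  by change (v r != v p); rewrite (inj_eq perm_inj) neq_ltn pr orbT.
have vrNq : (v r : nat) != v q.
  by change (v r != v q); rewrite (inj_eq perm_inj) neq_ltn rq.
lia.
Qed.

Lemma ninv_swapp v p q : (p < q)%N -> (v p < v q)%N ->
  ninv (swapp v p q) = (ninv v + 1 + 2 * #|gap v p q|)%N.
Proof.
move=> pq vpq; set t := tperm p q.
have ninvE : ninv (swapp v p q) =
    (\sum_(a < n) \sum_(b < n) ((t a < t b) && (v b < v a)))%N.
  rewrite ninv_sum (reindex_inj (@perm_inj _ t)); apply: eq_bigr => a _.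
  rewrite (reindex_inj (@perm_inj _ t)); apply: eq_bigr => b _.
  by rewrite !swappE !tpermK.
have pairsE : (\sum_(a < n) \sum_(b < n) _ = \sum_(a < n) \sum_(b < n) _)%N :=
  eq_bigr _ (fun a _ =>
    eq_bigr _ (fun b _ => ltn_tperm_indicator a b (v b < v a)%N pq)).
move: pairsE.
under eq_bigr do rewrite !big_split.
under [X in _ = X -> _]eq_bigr do rewrite !big_split.
rewrite !big_split /= !sum_pickl !sum_pickr !sum_pick -ninvE -ninv_sum.
have -> : (v q < v p)%N = false by rewrite ltnNge ltnW.
rewrite vpq /= => pairsE.
have betweenE : (\sum_(r < n) _ = \sum_(r < n) _)%N :=
  eq_bigr _ (fun r _ => gap_indicator r vpq).
rewrite !big_split /= big1_eq addn0 -card_gapE in betweenE; lia.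
Qed.

Lemma covby_ninv u v : covby u v -> ninv v = (ninv u).+1.
Proof. by case/existsP => i /existsP [j /and3P [_ _ /eqP]]. Qed.

Lemma covby_swappE v p q : (p < q)%N ->
  covby v (swapp v p q) = (v p < v q)%N && (#|gap v p q| == 0%N).
Proof.
move=> pq; apply/idP/andP => [/covby_ninv | [vpq /eqP gap0]]; last first.
  apply/existsP; exists p; apply/existsP; exists q.
  by rewrite pq eqxx ninv_swapp // gap0 muln0 addn0 addn1 eqxx.
have [vpq | vqp | /val_inj/perm_inj pEq] := ltngtP (v p) (v q).
- by rewrite ninv_swapp //; lia.
- have := @ninv_swapp (swapp v p q) p q pq.
  by rewrite swappK !swappE tpermL tpermR => /(_ vqp) ->; lia.
- by move: pq; rewrite pEq ltnn.
Qed.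

End Inversions.

Section Action.
Variable n : nat.
Implicit Types (a b : Mod n) (v : 'S_n) (p q : 'I_n).

Lemma dact_ordE p q a v :
  dact_ord p q a v = if covby v (swapp v p q) then a (swapp v p q) else 0.
Proof.
rewrite /dact_ord sum_ffunE (bigD1 (swapp v p q)) //= big1 ?addr0.
  by rewrite swappK; case: ifP => _; rewrite !ffunE ?eqxx.
move=> w wNv; case: ifP => _; rewrite !ffunE //.
by case: eqP => // vE; move: wNv; rewrite vE swappK eqxx.
Qed.

Lemma dact_ord_is_zmod_morphism p q : zmod_morphism (dact_ord p q).
Proof.
move=> a b; apply/ffunP => v; rewrite !ffunE !dact_ordE !ffunE.
by case: ifP; rewrite ?subr0.
Qed.

Lemma pmul_is_zmod_morphism (y : Pol n) : zmod_morphism (pmul y).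
Proof. by move=> a b; apply/ffunP => v; rewrite !ffunE mulrBr. Qed.

Lemma dact_ord_pmul p q (y : Pol n) a :
  dact_ord p q (pmul y a) = pmul y (dact_ord p q a).
Proof.
by apply/ffunP => v; rewrite !ffunE !dact_ordE !ffunE; case: ifP; rewrite ?mulr0.
Qed.

Lemma dact_ord_nil p q a : dact_ord p q (dact_ord p q a) = 0.
Proof.
apply/ffunP => v; rewrite !dact_ordE swappK ffunE.
case: ifP => // /covby_ninv ninvE; case: ifP => // /covby_ninv; lia.
Qed.

End Action.

HB.instance Definition _ n (p q : 'I_n) :=
  GRing.isZmodMorphism.Build (Mod n) (Mod n) (dact_ord p q)
    (dact_ord_is_zmod_morphism p q).

HB.instance Definition _ n (y : Pol n) :=
  GRing.isZmodMorphism.Build (Mod n) (Mod n) (pmul y) (pmul_is_zmod_morphism y).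

Section DescendingSpan.
Variables n i : nat.
Implicit Types (a b : Mod n) (v : 'S_n) (j k p q : 'I_n).

Lemma desc_tailP v :
  reflect (forall p q, (i <= p)%N -> (p < q)%N -> (v q < v p)%N) (desc_tail i v).
Proof.
apply: (iffP forallP) => [desc p q ip pq | desc p].
  by move/forallP/(_ q)/implyP: (desc p); apply; rewrite ip.
by apply/forallP => q; apply/implyP => /andP[]; apply: desc.
Qed.

Lemma in_span_descD a b :
  in_span_desc i a -> in_span_desc i b -> in_span_desc i (a + b).
Proof.
move=> Ha Hb v; rewrite ffunE; have [av0|/Ha //] := eqVneq (a v) 0.
by rewrite av0 add0r => /Hb.
Qed.

Lemma in_span_desc_sum (I : Type) (r : seq I) (P : pred I) (F : I -> Mod n) :
  (forall x, P x -> in_span_desc i (F x)) -> in_span_desc i (\sum_(x <- r | P x) F x).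
Proof.
move=> HF; apply: big_ind => //; last exact: in_span_descD.
by move=> v; rewrite ffunE eqxx.
Qed.

Lemma in_span_desc_pmul (y : Pol n) a : in_span_desc i a -> in_span_desc i (pmul y a).
Proof.
move=> Ha v; rewrite ffunE; have [av0|/Ha //] := eqVneq (a v) 0.
by rewrite av0 mulr0 eqxx.
Qed.

Lemma dact_ord_span_eq0 p q b : (i <= p)%N -> (p.+1 < q)%N -> in_span_desc i b ->
  dact_ord p q b = 0.
Proof.
move=> ip pq Hb; apply/ffunP => v; rewrite dact_ordE ffunE covby_swappE; last lia.
case: andP => // -[vpq /pred0P gap0].
have [//|/Hb/desc_tailP desc] := eqVneq (b (swapp v p q)) 0.
have [r rE] : {r : 'I_n | r = p.+1 :> nat}.
  by exists (Ordinal (ltn_trans pq (ltn_ord q))).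
have := gap0 r; rewrite /gap /= rE.
have := desc p r ip; have := desc r q.
rewrite !swappE tpermL tpermR !tpermD -?(inj_eq val_inj) /= ?rE; lia.
Qed.

Lemma dact_ord_span_stable k j b : (k < i)%N -> (i <= j)%N -> in_span_desc i b ->
  in_span_desc i (dact_ord k j b).
Proof.
move=> ki ij Hb v; rewrite dact_ordE covby_swappE; last lia.
case: andP => [[vkj /pred0P gap0] /Hb/desc_tailP desc|]; last by rewrite eqxx.
apply/desc_tailP => p q ip pq.
have kNp : k != p by rewrite -(inj_eq val_inj) /=; lia.
have kNq : k != q by rewrite -(inj_eq val_inj) /=; lia.
have := desc p q ip pq; rewrite !swappE.
have [jp | jNp] := eqVneq j p.
  subst p; have jNq : j != q by rewrite -(inj_eq val_inj) /=; lia.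
  by rewrite tpermR tpermD //; lia.
have [jq | jNq] := eqVneq j q; last by rewrite !tpermD.
subst q.
rewrite tpermR tpermD // => vkp.
have vpNj : (v p : nat) != v j by change (v p != v j); rewrite (inj_eq perm_inj) eq_sym.
have := gap0 p; rewrite /gap /=; lia.
Qed.

Lemma dact_ord_braid k p q a :
  (k < p)%N -> (i <= p)%N -> q = p.+1 :> nat -> in_span_desc i a ->
  dact_ord p q (dact_ord k p a) = dact_ord k q (dact_ord p q a).
Proof.
move=> kp ip qE Ha; apply/ffunP => v.
have kNp : k != p by rewrite -(inj_eq val_inj) /=; lia.
have kNq : k != q by rewrite -(inj_eq val_inj) /=; lia.
have pNq : p != q by rewrite -(inj_eq val_inj) /=; lia.
have pq : (p < q)%N by rewrite qE.
have kq : (k < q)%N by rewrite qE ltnS ltnW.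
rewrite !dact_ordE !(covby_swappE _ pq) !card_gap_adj // (covby_swappE _ kp)
  (covby_swappE _ kq) swapp_braid //.
have [-> | /Ha/desc_tailP desc] := eqVneq (a (swapp (swapp v k q) p q)) 0.
  by rewrite !if_same.
have qNp : q != p by rewrite eq_sym.
have := desc p q ip pq.
rewrite !swappE tpermL tpermR tpermR (tpermD kNp qNp) => vpk.
have tpq_k : tperm p q k = k by rewrite tpermD // eq_sym.
have gapE : gap (swapp v p q) k p =i gap v k q.
  move=> r; rewrite -!topredE /gap /= !swappE tpermL tpq_k.
  have [rp | pr | /val_inj ->] := ltngtP r p.
  - rewrite tpermD ?rp ?(ltn_trans rp pq) // -(inj_eq val_inj) /=; lia.
  - by rewrite [(r < q)%N]ltnNge qE pr !andbF.
  - by rewrite [(v k < v p)%N]ltnNge (ltnW vpk) !andbF.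
rewrite (eq_card gapE) tpq_k vpk.
case: ifP => [_ | /negP vpqF]; first by case: ifP.
by case: ifP => // /andP[vkq _]; case: vpqF; rewrite (ltn_trans vpk vkq).
Qed.

End DescendingSpan.

Section OneBased.
Variable n : nat.
Implicit Types (a b : Mod n) (p q : 'I_n).

Lemma dactE p q a : dact p.+1 q.+1 a = dact_ord p q a.
Proof. by rewrite /dact /= !valK. Qed.

Lemma dact_is_zmod_morphism (j k : nat) : zmod_morphism (@dact n j k).
Proof.
move=> a b; rewrite /dact.
case: (insub j.-1 : option 'I_n) => [p|]; last by rewrite subr0.
by case: (insub k.-1 : option 'I_n) => [q|]; rewrite ?raddfB ?subr0.
Qed.

Lemma Bact_ordE (i : nat) q a : (i <= n)%N ->
  Bact i q.+1 a = \sum_(p < n | (p < i)%N) dact_ord p q a.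
Proof.
move=> iN; rewrite /Bact big_add1 /= big_mkord.
rewrite (big_ord_widen n (fun k => dact k.+1 q.+1 a) iN).
by apply: eq_bigr => p _; rewrite dactE.
Qed.

End OneBased.

HB.instance Definition _ n (j k : nat) :=
  GRing.isZmodMorphism.Build (Mod n) (Mod n) (@dact n j k) (dact_is_zmod_morphism j k).

Lemma Bact_is_zmod_morphism n (i j : nat) : zmod_morphism (@Bact n i j).
Proof. by move=> a b; rewrite /Bact -sumrB; apply: eq_bigr => k _; rewrite raddfB. Qed.

HB.instance Definition _ n (i j : nat) :=
  GRing.isZmodMorphism.Build (Mod n) (Mod n) (@Bact n i j) (Bact_is_zmod_morphism i j).

Lemma yBact_is_zmod_morphism n (y : Pol n) (i j : nat) : zmod_morphism (yBact y i j).
Proof. by move=> a b; rewrite /yBact !raddfB addrACA opprD. Qed.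

HB.instance Definition _ n (y : Pol n) (i j : nat) :=
  GRing.isZmodMorphism.Build (Mod n) (Mod n) (yBact y i j)
    (yBact_is_zmod_morphism y i j).

Section Factors.
Variables (n i : nat) (y : Pol n).
Implicit Types (a b : Mod n) (j : nat).

Lemma yBactS j b : yBact y i.+1 j b = yBact y i j b + dact i.+1 j b.
Proof. by rewrite /yBact /Bact big_nat_recr //= addrA. Qed.

Lemma yBact_span j b :
  (i < j <= n)%N -> in_span_desc i b -> in_span_desc i (yBact y i j b).
Proof.
case: j => [//|j] /andP[ij jn] Hb.
rewrite /yBact -[j]/(Ordinal jn : nat) Bact_ordE; last lia.
apply: in_span_descD; first exact: in_span_desc_pmul.
by apply: in_span_desc_sum => k ki; apply: dact_ord_span_stable.
Qed.

Hypothesis i2n : (i.+2 <= n)%N.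

(* The paper's positions i+1 and i+2, as 0-based ordinals. *)
Let p0 : 'I_n := Ordinal (ltnW i2n).
Let p1 : 'I_n := Ordinal i2n.

Lemma dact_span_eq0 j b : (i.+3 <= j <= n)%N -> in_span_desc i b -> dact i.+1 j b = 0.
Proof.
case: j => [//|j] /andP[ij jn] Hb.
by rewrite -[j]/(Ordinal jn : nat) -[i]/(p0 : nat) dactE (dact_ord_span_eq0 _ _ Hb).
Qed.

Lemma yBact_shift j b : (i.+3 <= j <= n)%N -> in_span_desc i b ->
  yBact y i.+1 j b = yBact y i j b.
Proof. by move=> jn Hb; rewrite yBactS dact_span_eq0 ?addr0. Qed.

Lemma foldl_yBact_shift (s : seq nat) b :
  all (fun j => i.+3 <= j <= n)%N s -> in_span_desc i b ->
  foldl (fun b j => yBact y i.+1 j b) b s = foldl (fun b j => yBact y i j b) b s.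
Proof.
elim: s b => [//|j s IHs] b /= /andP[js sn] Hb.
by rewrite yBact_shift // IHs //; apply: yBact_span => //; lia.
Qed.

Lemma ythetaact_span a : in_span_desc i a ->
  ythetaact y i.+1 a = yBact y i i.+1 a - dact i.+1 i.+2 a.
Proof.
move=> Ha; rewrite /ythetaact /thetaact (big_ltn (_ : i.+2 < n.+1)%N) //.
have -> : \sum_(i.+3 <= j < n.+1) dact i.+1 j a = 0.
  by rewrite big_nat_cond big1 // => j /andP[jn _]; apply: (dact_span_eq0 _ Ha); lia.
by rewrite addr0 /yBact /Bact opprD opprK addrA.
Qed.

Lemma yBact_pair a : in_span_desc i a ->
  yBact y i.+1 i.+2 (yBact y i i.+1 a - dact i.+1 i.+2 a) =
  yBact y i i.+2 (yBact y i i.+1 a).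
Proof.
move=> Ha; have dE b : dact i.+1 i.+2 b = dact_ord p0 p1 b := dactE p0 p1 b.
have iN : (i <= n)%N by lia.
have braidE : dact_ord p0 p1 (yBact y i i.+1 a) = yBact y i i.+2 (dact_ord p0 p1 a).
  rewrite /yBact (Bact_ordE p0) // (Bact_ordE p1) // raddfD raddf_sum /= dact_ord_pmul.
  by congr (_ + _); apply: eq_bigr => k ki; apply: (dact_ord_braid (i := i)).
by rewrite yBactS !dE !raddfB /= braidE dact_ord_nil subr0 subrK.
Qed.

End Factors.

Theorem lemma4p21 (n : nat) (i : nat) (a : Mod n) (k : 'I_n) :
  (1 <= i)%N -> (i <= n - 2)%N -> in_span_desc i a ->
  Ract ('X_k : Pol n) i a = Ract ('X_k : Pol n) i.+1 (ythetaact ('X_k : Pol n) i.+1 a).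
Proof.
move=> i1 i2 Ha; have i2n : (i.+2 <= n)%N by lia.
rewrite ythetaact_span // /Ract.
have -> : (n - i = (n - i.+2).+2)%N by lia.
have -> : (n - i.+1 = (n - i.+2).+1)%N by lia.
rewrite /= yBact_pair // foldl_yBact_shift //.
  by apply/allP => j; rewrite mem_iota; lia.
by apply: yBact_span; [lia | apply: yBact_span => //; lia].
Qed.
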